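(* Let $\mathsf{A}\in\mathcal{O}(\Omega,\mathcal{H})$ be a POVM and $\mathcal{J}\in\mathrm{Ins}(\Lambda,\mathcal{H},\mathcal{V})$ an instrument. If $\mathsf{A}$ does not disturb $\mathcal{J}$, then $\mathsf{A}$ and $\mathcal{J}$ are compatible. Furthermore, if $\mathsf{A}$ is sharp, then the converse also holds: if $\mathsf{A}$ and $\mathcal{J}$ are compatible then $\mathsf{A}$ does not disturb $\mathcal{J}$.
   Context: All Hilbert spaces are finite-dimensional and complex, and all outcome sets are finite. A POVM $\mathsf{A}\in\mathcal{O}(\Omega,\mathcal{H})$ is a map $x\mapsto \mathsf{A}(x)$ from $\Omega$ to positive operators on $\mathcal{H}$ with $\sum_x \mathsf{A}(x)=I$; it is sharp if $\mathsf{A}(x)^2=\mathsf{A}(x)$ for all $x$. An instrument $\mathcal{I}\in\mathrm{Ins}(\Omega,\mathcal{H},\mathcal{K})$ is a family $(\mathcal{I}_x)_{x\in\Omega}$ of completely positive trace-nonincreasing linear maps $\mathcal{L}(\mathcal{H})\to\mathcal{L}(\mathcal{K})$ such that $\Phi^{\mathcal{I}}:=\sum_x\mathcal{I}_x$ is trace preserving; its induced POVM $\mathsf{A}^{\mathcal{I}}$ is defined by $\mathrm{tr}[\mathsf{A}^{\mathcal{I}}(x)\varrho]=\mathrm{tr}[\mathcal{I}_x(\varrho)]$; $\mathrm{Ins}(\Omega,\mathcal{H}):=\mathrm{Ins}(\Omega,\mathcal{H},\mathcal{H})$. An instrument $\mathcal{I}\in\mathrm{Ins}(\Omega,\mathcal{H})$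 does not disturb $\mathcal{J}\in\mathrm{Ins}(\Lambda,\mathcal{H},\mathcal{V})$ if $\mathcal{J}_y\circ\Phi^{\mathcal{I}}=\mathcal{J}_y$ for all $y\in\Lambda$. A POVM $\mathsf{A}\in\mathcal{O}(\Omega,\mathcal{H})$ does not disturb $\mathcal{J}$ if there exists $\mathcal{I}\in\mathrm{Ins}(\Omega,\mathcal{H})$ with $\mathsf{A}^{\mathcal{I}}=\mathsf{A}$ that does not disturb $\mathcal{J}$. A POVM $\mathsf{A}\in\mathcal{O}(\Omega,\mathcal{H})$ and an instrument $\mathcal{J}\in\mathrm{Ins}(\Lambda,\mathcal{H},\mathcal{V})$ are compatible if there exists $\mathcal{G}\in\mathrm{Ins}(\Omega\times\Lambda,\mathcal{H},\mathcal{V})$ with $\sum_{x}\mathcal{G}_{(x,y)}=\mathcal{J}_y$ for all $y$ and $\sum_y\mathsf{A}^{\mathcal{G}}(x,y)=\mathsf{A}(x)$ for all $x$. *)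

(* Finite-dimensional quantum measurement theory.
   Scalars: an arbitrary numeric closed field C (e.g. the complex numbers);
   a Hilbert space of dimension n is C^n, operators are 'M[C]_n. *)
From HB Require Import structures.
From mathcomp Require Import all_boot all_order all_algebra.
Set Implicit Arguments. Unset Strict Implicit. Unset Printing Implicit Defensive.
Import Order.TTheory GRing.Theory Num.Theory.
Local Open Scope ring_scope.

Section QDefs.
Variable C : numClosedFieldType.

Definition adjmx m n (A : 'M[C]_(m, n)) : 'M[C]_(n, m) := (map_mx Num.conj A)^T.

Definition psd n (A : 'M[C]_n) : Prop :=
  forall v : 'cV[C]_n, 0 <= (adjmx v *m A *m v) 0 0.

Definition linmap n m := {linear 'M[C]_n -> 'M[C]_m}.

(* complete positivity: id_k (x) Phi is positive for every k, where an
   operator on C^k (x) C^n is a k x k block matrix of n x n blocks *)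
Definition cp n m (Phi : linmap n m) : Prop :=
  forall (k : nat) (X : 'I_k -> 'I_k -> 'M[C]_n),
    psd (\mxblock_(i < k, j < k) X i j) ->
    psd (\mxblock_(i < k, j < k) Phi (X i j)).

Definition trace_nonincreasing n m (Phi : linmap n m) : Prop :=
  forall rho : 'M[C]_n, psd rho -> \tr (Phi rho) <= \tr rho.

Definition trace_preserving n m (Phi : 'M[C]_n -> 'M[C]_m) : Prop :=
  forall rho : 'M[C]_n, \tr (Phi rho) = \tr rho.

Definition is_povm (Omega : finType) n (A : Omega -> 'M[C]_n) : Prop :=
  (forall x, psd (A x)) /\ \sum_(x : Omega) A x = 1%:M.

Definition sharp (Omega : finType) n (A : Omega -> 'M[C]_n) : Prop :=
  forall x, A x *m A x = A x.

Definition total_map (Omega : finType) n m (I : Omega -> linmap n m)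
  (rho : 'M[C]_n) : 'M[C]_m := \sum_(x : Omega) I x rho.

Definition is_instrument (Omega : finType) n m (I : Omega -> linmap n m) : Prop :=
  (forall x, cp (I x)) /\ (forall x, trace_nonincreasing (I x)) /\
  trace_preserving (total_map I).

(* induced POVM: the unique A^I with tr[A^I(x) rho] = tr[I_x(rho)] for all rho;
   explicitly A^I(x)_{ij} = tr[I_x(E_{ji})]. *)
Definition induced_povm (Omega : finType) n m (I : Omega -> linmap n m)
  (x : Omega) : 'M[C]_n :=
  \matrix_(i, j) \tr (I x (delta_mx j i)).

Definition instr_not_disturb (Omega Lambda : finType) n v
  (I : Omega -> linmap n n) (J : Lambda -> linmap n v) : Prop :=
  forall y rho, J y (total_map I rho) = J y rho.

Definition povm_not_disturb (Omega Lambda : finType) n v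
  (A : Omega -> 'M[C]_n) (J : Lambda -> linmap n v) : Prop :=
  exists I : Omega -> linmap n n,
    [/\ is_instrument I, induced_povm I = A & instr_not_disturb I J].

Definition compatible (Omega Lambda : finType) n v
  (A : Omega -> 'M[C]_n) (J : Lambda -> linmap n v) : Prop :=
  exists G : Omega * Lambda -> linmap n v,
    [/\ is_instrument G,
        forall y rho, \sum_(x : Omega) G (x, y) rho = J y rho &
        forall x, \sum_(y : Lambda) induced_povm G (x, y) = A x].

End QDefs.

From HB Require Import structures.
From mathcomp Require Import all_boot all_order all_algebra.
From Stdlib Require Import FunctionalExtensionality.
Set Implicit Arguments. Unset Strict Implicit. Unset Printing Implicit Defensive.
Import Order.TTheory GRing.Theory Num.Theory.
Local Open Scope ring_scope.

(* If an instrument I with POVM A does not disturb J, then measuring I and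
   then J is a joint instrument G_(x,y) = J_y o I_x with the right marginals.
   Conversely, let A be sharp and G a joint instrument for A and J.  The
   effect of G_(x,y) lies below the projection A_x, and a completely positive
   map whose effect lies below a projection P only sees the compression
   P X P.  Hence G_(x,y) = G_(x,y)(A_x . A_x) kills the other Lüders branches
   A_x' . A_x' (x' <> x, as A_x' A_x = 0), so the Lüders instrument
   X |-> A_x X A_x does not disturb J = sum_x G_(x,.). *)

Section Measurement.
Variable C : numClosedFieldType.

Local Notation ecV i := (@delta_mx C _ 1 i ord0).

Lemma adjmxK m n (A : 'M[C]_(m, n)) : adjmx (adjmx A) = A.
Proof. by apply/matrixP=> i j; rewrite !mxE conjCK. Qed.

Lemma adjmxM m n p (A : 'M[C]_(m, n)) (B : 'M[C]_(n, p)) :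
  adjmx (A *m B) = adjmx B *m adjmx A.
Proof. by rewrite /adjmx map_mxM trmx_mul. Qed.

Lemma adjmxD m n (A B : 'M[C]_(m, n)) : adjmx (A + B) = adjmx A + adjmx B.
Proof. by rewrite /adjmx map_mxD linearD. Qed.

Lemma adjmxN m n (A : 'M[C]_(m, n)) : adjmx (- A) = - adjmx A.
Proof. by apply/matrixP=> i j; rewrite !mxE rmorphN. Qed.

Lemma adjmxZ m n a (A : 'M[C]_(m, n)) : adjmx (a *: A) = a^* *: adjmx A.
Proof. by apply/matrixP=> i j; rewrite !mxE rmorphM. Qed.

Lemma adjmx1 n : adjmx (1%:M : 'M[C]_n) = 1%:M.
Proof.
by apply/matrixP=> i j; rewrite !mxE eq_sym; case: eqP; rewrite ?rmorph1 ?rmorph0.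
Qed.

Lemma adjmx_delta m n (i : 'I_m) (j : 'I_n) :
  adjmx (delta_mx i j : 'M[C]_(m, n)) = delta_mx j i.
Proof.
by apply/matrixP=> a b; rewrite !mxE; do 2!case: (_ == _); rewrite ?rmorph1 ?rmorph0.
Qed.

Lemma adjmx_mxdiag k n (K : 'I_k -> 'M[C]_n) :
  adjmx (\mxdiag_(i < k) K i) = \mxdiag_(i < k) adjmx (K i).
Proof.
apply/matrixP=> s t; rewrite !mxE eq_sym.
case: eqP => [e|_]; last by rewrite !(mxE, raddf0) ?rmorph0.
by rewrite !conform_mx_id e !mxE.
Qed.

Lemma delta_mx_outer n (i j : 'I_n) :
  delta_mx i j = ecV i *m adjmx (ecV j) :> 'M[C]_n.
Proof. by rewrite adjmx_delta mul_delta_mx. Qed.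

Lemma real_eq0_of_affine_ge0 (c r : C) : 0 <= c ->
  (forall s : C, s \is Num.real -> 0 <= c + s * r) -> r = 0.
Proof.
move=> c_ge0 h; have := h 1 (rpred1 _); rewrite mul1r => cr_ge0.
have r_real : r \is Num.real by rewrite -(addKr c r) rpredD ?rpredN ?ger0_real.
apply/eqP; apply/negP => /negP r_neq0.
have s_real : - (c + 1) / r \is Num.real.
  by rewrite rpredM ?rpredV // rpredN rpredD ?rpred1 ?ger0_real.
have := h _ s_real.
by rewrite -mulrA mulVf // mulr1 opprD addrA subrr sub0r oppr_ge0 ler10.
Qed.

Lemma eq0_of_conj_affine_ge0 (c a b : C) :
  (forall t, 0 <= c + t^* * a + t * b) -> a = 0 /\ b = 0.
Proof.
move=> h; have c_ge0 : 0 <= c by have := h 0; rewrite rmorph0 !mul0r !addr0.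
have ab0 : a + b = 0.
  apply: (real_eq0_of_affine_ge0 c_ge0) => s s_real; have := h s.
  by rewrite conj_Creal // -addrA -mulrDr.
have ba0 : 'i * (b - a) = 0.
  apply: (real_eq0_of_affine_ge0 c_ge0) => s s_real; have := h ('i * s).
  rewrite rmorphM /= conjCi conj_Creal // -addrA.
  congr (0 <= c + _).
  by rewrite mulrBr mulrDr mulrN !mulNr !mulrA [s * 'i]mulrC addrC.
have ba : b = a.
  apply/eqP; rewrite -subr_eq0.
  by move/eqP: ba0; rewrite mulf_eq0 (negbTE (neq0Ci _)).
rewrite ba in ab0 *; have : a *+ 2 == 0 by rewrite mulr2n ab0.
by rewrite mulrn_eq0 /= => /eqP.
Qed.

Definition sesq n (M : 'M[C]_n) (z w : 'cV[C]_n) : C := (adjmx z *m M *m w) 0 0.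

Lemma sesq_delta n (M : 'M[C]_n) i j : sesq M (ecV i) (ecV j) = M i j.
Proof. by rewrite /sesq adjmx_delta -rowE -colE !mxE. Qed.

Lemma sesqDl n (M : 'M[C]_n) z1 z2 w : sesq M (z1 + z2) w = sesq M z1 w + sesq M z2 w.
Proof. by rewrite /sesq adjmxD !mulmxDl mxE. Qed.

Lemma sesqDr n (M : 'M[C]_n) z w1 w2 : sesq M z (w1 + w2) = sesq M z w1 + sesq M z w2.
Proof. by rewrite /sesq !mulmxDr mxE. Qed.

Lemma sesqZl n (M : 'M[C]_n) a z w : sesq M (a *: z) w = a^* * sesq M z w.
Proof. by rewrite /sesq adjmxZ -!scalemxAl mxE. Qed.

Lemma sesqZr n (M : 'M[C]_n) a z w : sesq M z (a *: w) = a * sesq M z w.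
Proof. by rewrite /sesq -scalemxAr mxE. Qed.

Lemma sesq0 n (z w : 'cV[C]_n) : sesq 0 z w = 0.
Proof. by rewrite /sesq mulmx0 mul0mx mxE. Qed.

Lemma sesqD n (M N : 'M[C]_n) z w : sesq (M + N) z w = sesq M z w + sesq N z w.
Proof. by rewrite /sesq mulmxDr mulmxDl mxE. Qed.

Lemma sesqB n (M N : 'M[C]_n) z w : sesq (M - N) z w = sesq M z w - sesq N z w.
Proof. by rewrite /sesq mulmxBr mulmxBl !mxE. Qed.

Lemma sesqZ n (M : 'M[C]_n) a z w : sesq (a *: M) z w = a * sesq M z w.
Proof. by rewrite /sesq -scalemxAr -scalemxAl mxE. Qed.

Lemma sesq_adjmx n (M : 'M[C]_n) z w : sesq (adjmx M) z w = (sesq M w z)^*.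
Proof.
rewrite /sesq -[w in LHS]adjmxK -!adjmxM mulmxA.
by rewrite /adjmx !mxE.
Qed.

Lemma sesq_adjmx_mul n (K : 'M[C]_n) z :
  sesq (adjmx K *m K) z z = (adjmx (K *m z) *m (K *m z)) 0 0.
Proof. by rewrite /sesq adjmxM !mulmxA. Qed.

Lemma mx_eq0_of_sesq_ge0 n (M : 'M[C]_n) : (forall i, M i i = 0) ->
  (forall z, 0 <= sesq M z z) -> M = 0.
Proof.
move=> M_diag0 M_ge0; apply/matrixP=> i j; rewrite mxE.
apply: (proj2 (@eq0_of_conj_affine_ge0 0 (M j i) (M i j) _)) => t.
have := M_ge0 (ecV i + t *: ecV j).
rewrite !(sesqDl, sesqDr, sesqZl, sesqZr, sesq_delta) !M_diag0.
by rewrite !mulr0 !addr0 add0r add0r addrC.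
Qed.

Lemma sesq_eq0 n (N : 'M[C]_n) : (forall z, sesq N z z = 0) -> N = 0.
Proof.
by move=> N0; apply: mx_eq0_of_sesq_ge0 => [i|z]; rewrite ?N0 // -sesq_delta N0.
Qed.

Lemma normsq_ge0 m (w : 'cV[C]_m) : 0 <= (adjmx w *m w) 0 0.
Proof. by rewrite mxE sumr_ge0 // => k _; rewrite !mxE mulrC mul_conjC_ge0. Qed.

Lemma normsq_eq0 m (w : 'cV[C]_m) : (adjmx w *m w) 0 0 = 0 -> w = 0.
Proof.
rewrite mxE => /eqP; rewrite psumr_eq0 => [/allP w0|k _]; last first.
  by rewrite !mxE mulrC mul_conjC_ge0.
apply/matrixP=> k l; rewrite [l]ord1 mxE.
by have := w0 k (mem_index_enum _); rewrite !mxE mulrC mul_conjC_eq0 => /eqP.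
Qed.

Lemma adjmx_mul_eq0 n (K : 'M[C]_n) : adjmx K *m K = 0 -> K = 0.
Proof.
move=> KK0; apply/matrixP=> i j.
have /normsq_eq0/colP/(_ i) : (adjmx (K *m ecV j) *m (K *m ecV j)) 0 0 = 0.
  by rewrite -sesq_adjmx_mul KK0 sesq0.
by rewrite -colE !mxE.
Qed.

Lemma psd1 n : psd (1%:M : 'M[C]_n).
Proof. by move=> z; rewrite mulmx1 normsq_ge0. Qed.

Lemma psd_conj n m (K : 'M[C]_(m, n)) Y : psd Y -> psd (K *m Y *m adjmx K).
Proof.
by move=> Y_psd v; have := Y_psd (adjmx K *m v); rewrite adjmxM adjmxK !mulmxA.
Qed.

Lemma psd_outer n m (w : 'M[C]_(n, m)) : psd (w *m adjmx w).
Proof. by have := psd_conj w (@psd1 m); rewrite mulmx1. Qed.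

Lemma psdD n (M N : 'M[C]_n) : psd M -> psd N -> psd (M + N).
Proof. by move=> M_psd N_psd z; rewrite -/(sesq _ z z) sesqD addr_ge0 ?M_psd ?N_psd. Qed.

Lemma psd_sum n (I : finType) (P : pred I) (F : I -> 'M[C]_n) :
  (forall i, P i -> psd (F i)) -> psd (\sum_(i | P i) F i).
Proof.
move=> F_psd; elim/big_ind: _ => //; last exact: psdD.
by move=> z; rewrite -/(sesq _ z z) sesq0.
Qed.

Lemma psd_adjmx n (M : 'M[C]_n) : psd M -> adjmx M = M.
Proof.
move=> M_psd; apply/eqP; rewrite -subr_eq0; apply/eqP; apply: sesq_eq0 => z.
by rewrite sesqB sesq_adjmx (conj_Creal (ger0_real (M_psd z))) subrr.
Qed.

Lemma mxtrace_sesq n (M : 'M[C]_n) : \tr M = \sum_i sesq M (ecV i) (ecV i).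
Proof. by apply: eq_bigr => i _; rewrite sesq_delta. Qed.

Lemma psd_mxtrace_ge0 n (M : 'M[C]_n) : psd M -> 0 <= \tr M.
Proof. by move=> M_psd; rewrite mxtrace_sesq; apply: sumr_ge0 => i _; apply: M_psd. Qed.

Lemma psd_mxtrace_eq0 n (M : 'M[C]_n) : psd M -> \tr M = 0 -> M = 0.
Proof.
move=> M_psd; rewrite mxtrace_sesq => /eqP.
rewrite psumr_eq0 => [/allP diag0|i _]; last exact: M_psd.
apply: mx_eq0_of_sesq_ge0 M_psd => i.
by rewrite -sesq_delta; apply/eqP/diag0/mem_index_enum.
Qed.

Lemma psd_sum_eq0 n (I : finType) (P : pred I) (F : I -> 'M[C]_n) :
  (forall i, P i -> psd (F i)) -> \sum_(i | P i) F i = 0 -> forall i, P i -> F i = 0.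
Proof.
move=> F_psd /(congr1 mxtrace); rewrite linear_sum linear0 => /eqP.
rewrite psumr_eq0 => [/allP trF0 i Pi|i Pi]; last exact/psd_mxtrace_ge0/F_psd.
apply: psd_mxtrace_eq0; first exact: F_psd.
by have /implyP/(_ Pi)/eqP := trF0 i (mem_index_enum _).
Qed.

Lemma mxtrace_mul_outer n (M : 'M[C]_n) (w : 'cV[C]_n) :
  \tr (M *m (w *m adjmx w)) = sesq M w w.
Proof. by rewrite mulmxA mxtrace_mulC mulmxA trace_mx11. Qed.

Lemma mxtrace_mul_delta n (M : 'M[C]_n) i j : \tr (M *m delta_mx j i) = M i j.
Proof.
by rewrite delta_mx_outer mulmxA mxtrace_mulC mulmxA trace_mx11 -/(sesq _ _ _) sesq_delta.
Qed.

Lemma psd_castmx n n' (e1 e2 : n = n') (M : 'M[C]_n) :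
  psd (castmx (e1, e2) M) <-> psd M.
Proof. by case: n' / e1 e2 => e2; rewrite (eq_irrelevance e2 erefl) castmx_id. Qed.

Lemma psd_mxblock1 n (X : 'M[C]_n) : psd (\mxblock_(i < 1, j < 1) X) <-> psd X.
Proof. by rewrite {2}(mxEmxblock X); split=> /psd_castmx. Qed.

Lemma cp_psd n m (Phi : linmap C n m) X : cp Phi -> psd X -> psd (Phi X).
Proof.
by move=> Phi_cp /psd_mxblock1 X_psd; apply/psd_mxblock1/(Phi_cp 1%N (fun _ _ => X)).
Qed.

Lemma cp_comp n m p (Phi : linmap C n m) (Psi : linmap C m p) :
  cp Phi -> cp Psi -> cp (Psi \o Phi : linmap C n p).
Proof. by move=> Phi_cp Psi_cp k X X_psd; apply/Psi_cp/Phi_cp. Qed.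

Definition kraus n m (K : 'M[C]_(m, n)) (X : 'M[C]_n) : 'M[C]_m := K *m X *m adjmx K.

Fact kraus_semilinear n m (K : 'M[C]_(m, n)) : semilinear (kraus K).
Proof.
split=> [a X|X Y]; rewrite /kraus; first by rewrite -scalemxAr !scalemxAl.
by rewrite mulmxDr mulmxDl.
Qed.

HB.instance Definition _ n m (K : 'M[C]_(m, n)) :=
  GRing.isSemilinear.Build C 'M[C]_n 'M[C]_m _ (kraus K) (kraus_semilinear K).

Lemma cp_kraus n (K : 'M[C]_n) : cp (kraus K : linmap C n n).
Proof.
move=> k X X_psd.
have -> : \mxblock_(i < k, j < k) (kraus K : linmap C n n) (X i j) =
    \mxdiag_(i < k) K *m \mxblock_(i < k, j < k) X i j *m adjmx (\mxdiag_(i < k) K).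
  by rewrite adjmx_mxdiag mul_mxdiag_mxblock mul_mxblock_mxdiag.
exact: psd_conj.
Qed.

Lemma mxtrace_kraus n m (K : 'M[C]_(m, n)) X : \tr (kraus K X) = \tr (adjmx K *m K *m X).
Proof. by rewrite /kraus mxtrace_mulC !mulmxA. Qed.

Lemma mxtrace_proj_le n (P rho : 'M[C]_n) : adjmx P = P -> P *m P = P ->
  psd rho -> \tr (P *m rho) <= \tr rho.
Proof.
move=> P_adj P_idem rho_psd; rewrite -subr_ge0.
have := psd_mxtrace_ge0 (psd_conj (1%:M - P) rho_psd).
rewrite -/(kraus _ _) mxtrace_kraus adjmxD adjmxN adjmx1 P_adj.
by rewrite mulmxBl mul1mx mulmxBr mulmx1 P_idem subrr subr0 mulmxBl mul1mx linearB.
Qed.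

Lemma mxtrace_induced_povm (I : finType) n m (F : I -> linmap C n m) x rho :
  \tr (F x rho) = \tr (induced_povm F x *m rho).
Proof.
rewrite {1}[rho]matrix_sum_delta !linear_sum /=.
under eq_bigr do rewrite !linear_sum /=.
under eq_bigr do under eq_bigr do rewrite !linearZ /=.
rewrite [RHS]/mxtrace [RHS](eq_bigr (fun i => \sum_k induced_povm F x i k * rho k i));
  last by move=> i _; rewrite mxE.
rewrite [RHS]exchange_big; apply: eq_bigr => i _; apply: eq_bigr => k _.
by rewrite mxE mulrC.
Qed.

Lemma induced_povm_psd (I : finType) n m (F : I -> linmap C n m) x :
  cp (F x) -> psd (induced_povm F x).
Proof.
move=> Fx_cp z; rewrite -/(sesq _ z z) -mxtrace_mul_outer -mxtrace_induced_povm.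
exact/psd_mxtrace_ge0/(cp_psd Fx_cp)/psd_outer.
Qed.

Lemma linmap_outer_ext n m (Phi Psi : linmap C n m) :
  (forall u w : 'cV[C]_n, Phi (u *m adjmx w) = Psi (u *m adjmx w)) -> Phi =1 Psi.
Proof.
move=> PhiPsi X; rewrite [X]matrix_sum_delta !linear_sum; apply: eq_bigr => i _.
by rewrite !linear_sum; apply: eq_bigr => j _; rewrite !linearZ delta_mx_outer PhiPsi.
Qed.

(* Positivity of Phi on (a + t b)(a + t b)^* for all t kills the cross terms. *)
Lemma cp_outer_cross0 n m (Phi : linmap C n m) (a b : 'cV[C]_n) : cp Phi ->
  Phi (b *m adjmx b) = 0 -> Phi (a *m adjmx b) = 0 /\ Phi (b *m adjmx a) = 0.
Proof.
move=> Phi_cp Phib0.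
have cross0 z : sesq (Phi (a *m adjmx b)) z z = 0 /\ sesq (Phi (b *m adjmx a)) z z = 0.
  apply: (@eq0_of_conj_affine_ge0 (sesq (Phi (a *m adjmx a)) z z)) => t.
  have := cp_psd Phi_cp (psd_outer (a + t *: b)) z.
  rewrite -/(sesq _ z z) adjmxD adjmxZ mulmxDl !mulmxDr -!scalemxAl -!scalemxAr.
  by rewrite !linearD !linearZ /= Phib0 scaler0 !sesqD !sesqZ addrA sesq0 mulr0 addr0.
by split; apply: sesq_eq0 => z; case: (cross0 z).
Qed.

Lemma cp_compress_proj n m (Phi : linmap C n m) (B P : 'M[C]_n) : cp Phi ->
  (forall rho, \tr (Phi rho) = \tr (B *m rho)) -> psd (P - B) ->
  adjmx P = P -> P *m P = P -> forall X, Phi X = Phi (P *m X *m P).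
Proof.
move=> Phi_cp PhiB PB_psd P_adj P_idem.
pose Q := 1%:M - P.
have QP0 : Q *m P = 0 by rewrite mulmxBl mul1mx P_idem subrr.
have PQ : P + Q = 1%:M by rewrite addrC subrK.
(* tr Phi (Qu (Qu)^* ) = <Qu, B Qu> <= <Qu, P Qu> = 0 *)
have PhiQ0 (u : 'cV[C]_n) : Phi ((Q *m u) *m adjmx (Q *m u)) = 0.
  have PhiQu_psd := cp_psd Phi_cp (psd_outer (Q *m u)).
  apply: (psd_mxtrace_eq0 PhiQu_psd); apply/eqP.
  rewrite eq_le (psd_mxtrace_ge0 PhiQu_psd) andbT PhiB mxtrace_mul_outer.
  have PQu0 : sesq P (Q *m u) (Q *m u) = 0.
    by rewrite /sesq adjmxM adjmxD adjmxN adjmx1 P_adj -/Q -(mulmxA _ Q) QP0 mulmx0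
               mul0mx mxE.
  by have := PB_psd (Q *m u); rewrite -/(sesq _ _ _) sesqB PQu0 sub0r oppr_ge0.
suff PhiP : Phi =1 (Phi \o kraus P : linmap C n m).
  by move=> X; rewrite PhiP /= /kraus P_adj.
apply: linmap_outer_ext => u w /=.
have -> : kraus P (u *m adjmx w) = (P *m u) *m adjmx (P *m w).
  by rewrite /kraus adjmxM P_adj !mulmxA.
have splitP (z : 'cV[C]_n) : z = P *m z + Q *m z by rewrite -mulmxDl PQ mul1mx.
rewrite {1}[u]splitP {1}[w]splitP adjmxD mulmxDl !mulmxDr.
have [PuQw _] := cp_outer_cross0 (P *m u) Phi_cp (PhiQ0 w).
have [PwQu QuPw] := cp_outer_cross0 (P *m w) Phi_cp (PhiQ0 u).
have [QuQw _] := cp_outer_cross0 (Q *m u) Phi_cp (PhiQ0 w).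
by rewrite !linearD /= PuQw QuPw QuQw !addr0.
Qed.

Section LudersInstrument.
Variables (Omega : finType) (n : nat) (A : Omega -> 'M[C]_n).

Definition luders (x : Omega) : linmap C n n := kraus (A x).

Hypotheses (A_povm : is_povm A) (A_sharp : sharp A).

Lemma sharp_povm_adjmx x : adjmx (A x) = A x.
Proof. exact/psd_adjmx/(proj1 A_povm). Qed.

(* Sandwiching sum_y A_y = 1 between A_x gives sum_(y != x) (A_y A_x)^* (A_y A_x) = 0. *)
Lemma sharp_povm_orthogonal x x' : x' != x -> A x' *m A x = 0.
Proof.
move=> x'x; have [_ sumA] := A_povm.
pose K y := A y *m A x.
have KK y : adjmx (K y) *m K y = A x *m A y *m A x.
  by rewrite adjmxM !sharp_povm_adjmx -!mulmxA [A y *m (A y *m _)]mulmxA A_sharp.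
have sumK0 : \sum_(y | y != x) adjmx (K y) *m K y = 0.
  have : A x *m (\sum_y A y) *m A x = A x + 0 by rewrite sumA mulmx1 A_sharp addr0.
  rewrite mulmx_sumr mulmx_suml (bigD1 x) //= !A_sharp => /addrI sum0.
  by rewrite -[X in _ = X]sum0; apply: eq_bigr => y _; rewrite KK.
apply/adjmx_mul_eq0/(psd_sum_eq0 _ sumK0 x'x) => y _.
by have := psd_conj (adjmx (K y)) (@psd1 n); rewrite mulmx1 adjmxK.
Qed.

Lemma mxtrace_luders x rho : \tr (luders x rho) = \tr (A x *m rho).
Proof. by rewrite mxtrace_kraus sharp_povm_adjmx A_sharp. Qed.

Lemma luders_instrument : is_instrument luders.
Proof.
split; [|split].
- by move=> x; apply: cp_kraus.
- move=> x rho rho_psd; rewrite mxtrace_luders.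
  exact: mxtrace_proj_le (sharp_povm_adjmx x) (A_sharp x) rho_psd.
- move=> rho; rewrite /total_map linear_sum.
  under eq_bigr do rewrite /= mxtrace_luders.
  by rewrite -linear_sum -mulmx_suml (proj2 A_povm) mul1mx.
Qed.

Lemma induced_povm_luders : induced_povm luders = A.
Proof.
apply: functional_extensionality => x; apply/matrixP=> i j.
by rewrite mxE mxtrace_luders mxtrace_mul_delta.
Qed.

Lemma compatible_luders_not_disturb (Lambda : finType) v (J : Lambda -> linmap C n v) :
  compatible A J -> instr_not_disturb luders J.
Proof.
case=> G [[G_cp _] sumG indG] y rho; rewrite -!sumG; apply: eq_bigr => x _.
have AG_psd : psd (A x - induced_povm G (x, y)).
  rewrite -indG (bigD1 y) //= addrC addrK.
  by apply: psd_sum => y' _; apply: induced_povm_psd.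
have Gxy_compress := cp_compress_proj (G_cp (x, y)) (mxtrace_induced_povm G (x, y))
  AG_psd (sharp_povm_adjmx x) (A_sharp x).
rewrite /total_map linear_sum (bigD1 x) //= big1 => [|x' x'x].
  by rewrite addr0 [RHS]Gxy_compress /kraus sharp_povm_adjmx.
rewrite Gxy_compress /= /kraus sharp_povm_adjmx !mulmxA.
by rewrite sharp_povm_orthogonal 1?eq_sym // !mul0mx linear0.
Qed.

End LudersInstrument.

Section SequentialInstrument.
Variables (Omega Lambda : finType) (n m v : nat).
Variables (I : Omega -> linmap C n m) (J : Lambda -> linmap C m v).

Definition sequential_instrument (p : Omega * Lambda) : linmap C n v := J p.2 \o I p.1.

Lemma sum_sequential_instrument_fst y rho :
  \sum_x sequential_instrument (x, y) rho = J y (total_map I rho).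
Proof. by rewrite /total_map linear_sum. Qed.

Lemma sequential_instrument_instrument :
  is_instrument I -> is_instrument J -> is_instrument sequential_instrument.
Proof.
move=> [I_cp [I_tni I_tp]] [J_cp [J_tni J_tp]]; split; [|split].
- by move=> [x y]; apply: cp_comp.
- move=> [x y] rho rho_psd /=.
  exact: le_trans (J_tni y _ (cp_psd (I_cp x) rho_psd)) (I_tni x _ rho_psd).
- move=> rho; rewrite /total_map -(pair_big xpredT xpredT (fun x y => J y (I x rho))) /=.
  rewrite -[RHS](I_tp rho) /total_map !linear_sum; apply: eq_bigr => x _.
  exact: J_tp.
Qed.

Lemma sum_induced_povm_sequential_instrument x : trace_preserving (total_map J) ->
  \sum_y induced_povm sequential_instrument (x, y) = induced_povm I x.
Proof.
move=> J_tp; apply/matrixP=> i j; rewrite summxE !mxE.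
under eq_bigr do rewrite mxE /=.
by rewrite -linear_sum; apply: J_tp.
Qed.

End SequentialInstrument.

Lemma not_disturb_compatible (Omega Lambda : finType) n v (A : Omega -> 'M[C]_n)
  (J : Lambda -> linmap C n v) :
  is_instrument J -> povm_not_disturb A J -> compatible A J.
Proof.
move=> J_instr [I [I_instr <- I_nd]]; exists (sequential_instrument I J); split.
- exact: sequential_instrument_instrument.
- by move=> y rho; rewrite sum_sequential_instrument_fst I_nd.
- by move=> x; apply: sum_induced_povm_sequential_instrument; case: J_instr => _ [].
Qed.

End Measurement.

Theorem proposition4 (C : numClosedFieldType) (Omega Lambda : finType) (n v : nat)
  (A : Omega -> 'M[C]_n) (J : Lambda -> linmap C n v) :
  is_povm A -> is_instrument J ->
  (povm_not_disturb A J -> compatible A J) /\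
  (sharp A -> compatible A J -> povm_not_disturb A J).
Proof.
move=> A_povm J_instr; split; first exact: not_disturb_compatible.
move=> A_sharp AJ_compat; exists (luders A); split.
- exact: luders_instrument.
- exact: induced_povm_luders.
- exact: compatible_luders_not_disturb.
Qed.
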